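(* Consider the setting described in the context and suppose the stepsizes satisfy conditions (A), (B) and (C). Let $u^\star=(x^\star,y^\star)$ satisfy $0\in F(x^\star)+A^Ty^\star$ and $0\in G(y^\star)-Ax^\star$. Then there is a constant $C_U>0$ such that the PDHG iterates satisfy $\|u_k-u^\star\|_{H_k}^2\le C_U$ for all $k$.
   Context: Let $A\in\mathbb{R}^{M\times N}$, let $f$ and $g$ be convex functions on $\mathbb{R}^N$ and $\mathbb{R}^M$, and let $X\subset\mathbb{R}^N$, $Y\subset\mathbb{R}^M$ be convex sets; consider the saddle-point problem $\min_{x\in X}\max_{y\in Y} f(x)+y^TAx-g(y)$. Let $\chi_C$ denote the characteristic function of a set $C$ ($0$ on $C$, $+\infty$ off $C$), and let $F=\partial(f+\chi_X)$, $G=\partial(g+\chi_Y)$. It is assumed that the problem is feasible (such $u^\star$ exists) and that the minimizations below have solutions. The PDHG method with stepsizes $\tau_k,\sigma_k>0$ starts from $x_0,y_0$ and iterates $x_{k+1}=\arg\min_{x\in X} f(x)+\frac{1}{2\tau_k}\|x-(x_k-\tau_kA^Ty_k)\|^2$, $y_{k+1}=\arg\min_{y\in Y} g(y)+\frac{1}{2\sigma_k}\|y-(y_k+\sigma_kA(2x_{k+1}-x_k))\|^2$. Write $u_k=(x_k,y_k)$, $M_k=\begin{pmatrix}\tau_k^{-1}I & -A^T\\ -A & \sigma_k^{-1}I\end{pmatrix}$, $H_k=\begin{pmatrix}\tau_k^{-1}I & 0\\ 0 & \sigma_k^{-1}I\end{pmatrix}$, and for a symmetric (possibly indefinite) matrix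 $M$, $\|u\|_M^2:=u^TMu$. Let $\phi_k=\max\{(\tau_k-\tau_{k+1})/\tau_k,\ (\sigma_k-\sigma_{k+1})/\sigma_k,\ 0\}$. Conditions: (A) the sequences $\{\tau_k\}$ and $\{\sigma_k\}$ are bounded; (B) $\sum_{k\ge0}\phi_k<C_\phi<\infty$ for some constant $C_\phi$; (C) either (C1) there is a constant $L$ with $\tau_k\sigma_k<L<\rho(A^TA)^{-1}$ for all $k>0$ ($\rho$ = spectral radius), or (C2) either $X$ or $Y$ is bounded and there is $c\in(0,1)$ with $\|u_{k+1}-u_k\|_{M_k}^2\ge c\|u_{k+1}-u_k\|_{H_k}^2$ for all $k>0$. *)

From mathcomp Require Import all_boot all_order all_algebra.
From mathcomp Require Import classical_sets reals.
Set Implicit Arguments. Unset Strict Implicit. Unset Printing Implicit Defensive.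
Import Order.TTheory GRing.Theory Num.Theory.
Local Open Scope ring_scope.
Local Open Scope classical_set_scope.

Section Defs.
Variable R : realType.

Definition sqnorm n (v : 'cV[R]_n) : R := (v^T *m v) 0 0.

Definition qnorm2 n (Q : 'M[R]_n) (u : 'cV[R]_n) : R := (u^T *m Q *m u) 0 0.

Definition convex_fun n (f : 'cV[R]_n -> R) : Prop :=
  forall x y (t : R), 0 <= t <= 1 ->
    f (t *: x + (1 - t) *: y) <= t * f x + (1 - t) * f y.

Definition convex_set n (X : set 'cV[R]_n) : Prop :=
  forall x y (t : R), X x -> X y -> 0 <= t <= 1 -> X (t *: x + (1 - t) *: y).

Definition bounded_set n (X : set 'cV[R]_n) : Prop :=
  exists r : R, forall x, X x -> sqnorm x <= r.

(* p \in \partial (f + \chi_X)(x): x in X and the subgradient inequality on X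
   (outside X, f + \chi_X = +oo, so only z in X matter, and the subdifferential
   at points outside X is empty). *)
Definition subdiff_ind n (f : 'cV[R]_n -> R) (X : set 'cV[R]_n)
  (x p : 'cV[R]_n) : Prop :=
  X x /\ forall z, X z -> f x + (p^T *m (z - x)) 0 0 <= f z.

Definition is_argmin n (h : 'cV[R]_n -> R) (X : set 'cV[R]_n) (x : 'cV[R]_n) : Prop :=
  X x /\ forall z, X z -> h x <= h z.

(* spectral radius of a symmetric real matrix (all its eigenvalues are real) *)
Definition spec_radius n (B : 'M[R]_n) : R :=
  sup [set `|a| | a in [set a : R | eigenvalue B a]].

(* u = (x, y) is stacked as col_mx x y : 'cV_(N + M) *)
Definition Mmat N M (A : 'M[R]_(M, N)) (tau sigma : R) : 'M[R]_(N + M) :=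
  block_mx (tau^-1)%:M (- A^T) (- A) (sigma^-1)%:M.

Definition Hmat N M (tau sigma : R) : 'M[R]_(N + M) :=
  block_mx (tau^-1)%:M 0 0 (sigma^-1)%:M.

Definition phi (tau sigma : nat -> R) (k : nat) : R :=
  Num.max (Num.max ((tau k - tau k.+1) / tau k) ((sigma k - sigma k.+1) / sigma k)) 0.

Definition pdhg_iterates N M (A : 'M[R]_(M, N)) (f : 'cV[R]_N -> R) (g : 'cV[R]_M -> R)
  (X : set 'cV[R]_N) (Y : set 'cV[R]_M) (tau sigma : nat -> R)
  (x : nat -> 'cV[R]_N) (y : nat -> 'cV[R]_M) : Prop :=
  forall k,
    is_argmin (fun z => f z + (2 * tau k)^-1 * sqnorm (z - (x k - tau k *: (A^T *m y k)))) X (x k.+1)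
 /\ is_argmin (fun w => g w + (2 * sigma k)^-1 *
                  sqnorm (w - (y k + sigma k *: (A *m (2%:R *: x k.+1 - x k))))) Y (y k.+1).

End Defs.

From mathcomp Require Import all_boot all_order all_algebra.
From mathcomp Require Import classical_sets reals.
From mathcomp Require Import ring lra.
Import Order.TTheory GRing.Theory Num.Theory.
Set Implicit Arguments. Unset Strict Implicit. Unset Printing Implicit Defensive.
Local Open Scope ring_scope.
Local Open Scope classical_set_scope.

(* The iterates are Fejer monotone in the variable metric M_k up to a summable
   perturbation.  The two proximal steps produce subgradients at u_{k+1}, and
   monotonicity of the subdifferentials against u* gives
     |u_{k+1} - u*|_{M_k}^2 <= |u_k - u*|_{M_k}^2 - |u_{k+1} - u_k|_{M_k}^2.
   Either alternative of (C) makes the last term nonnegative and bounds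
   |.|_{H_k}^2 by al |.|_{M_k}^2 + be along the iterates: under (C1) because
   |A z|^2 <= rho(A^T A) |z|^2, under (C2) because one block of u_k - u* stays
   bounded.  Passing from M_k to M_{k+1} costs at most phi_k |.|_{H_{k+1}}^2, so
   b_k := al |u_k - u*|_{M_k}^2 + be satisfies (1 - al phi_k) b_{k+1} <= b_k,
   and a discrete Gronwall argument with sum phi_k < oo bounds b_k. *)

Lemma quad_ge0_discr (R : realFieldType) (a b c : R) : 0 <= c ->
  (forall s, 0 <= a + 2 * s * b + s ^+ 2 * c) -> b ^+ 2 <= a * c.
Proof.
move=> c_ge0 q_ge0; have [c_gt0|] := ltrP 0 c.
  have := q_ge0 (- b / c).
  have -> : a + 2 * (- b / c) * b + (- b / c) ^+ 2 * c = (a * c - b ^+ 2) / c.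
    by field; rewrite gt_eqF.
  by rewrite pmulr_lge0 ?invr_gt0 // subr_ge0.
move=> c_le0; have c0 : c = 0 by apply/eqP; rewrite eq_le c_le0 c_ge0.
subst c.
have [-> | b_neq0] := eqVneq b 0; first by rewrite expr0n mulr0.
have := q_ge0 (- (a + 1) / (2 * b)).
have -> : a + 2 * (- (a + 1) / (2 * b)) * b + (- (a + 1) / (2 * b)) ^+ 2 * 0 = - 1.
  by field; rewrite b_neq0.
by rewrite oppr_ge0 ler10.
Qed.

Lemma ge0_add_small (R : realFieldType) (a b : R) :
  (forall s, 0 < s <= 1 -> 0 <= a + s * b) -> 0 <= a.
Proof.
move=> Hs; apply/ler_addgt0Pr => e e_gt0.
set s := Num.min 1 (e / (`|b| + 1)).
have b1_gt0 : 0 < `|b| + 1 by have := normr_ge0 b; lra.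
have s_gt0 : 0 < s by rewrite lt_min ltr01 divr_gt0.
have s_le1 : s <= 1 by rewrite ge_min lexx.
have sb_le : s * b <= e.
  have : s * (`|b| + 1) <= e by rewrite -ler_pdivlMr // ge_min lexx orbT.
  by have := ler_norm b; nra.
by have := Hs s; rewrite s_gt0 s_le1 => /(_ isT); lra.
Qed.

Section DotProduct.
Variable R : realType.
Implicit Types (m n : nat).

Definition dotv n (u v : 'cV[R]_n) : R := (u^T *m v) 0 0.

Lemma sqnormE n (v : 'cV[R]_n) : sqnorm v = dotv v v.
Proof. by []. Qed.

Lemma dotvE n (u v : 'cV[R]_n) : dotv u v = \sum_i u i 0 * v i 0.
Proof. by rewrite /dotv !mxE; apply: eq_bigr => i _; rewrite mxE. Qed.

Lemma dotvC n (u v : 'cV[R]_n) : dotv u v = dotv v u.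
Proof. by rewrite !dotvE; apply: eq_bigr => i _; rewrite mulrC. Qed.

Lemma dotvDl n (u v w : 'cV[R]_n) : dotv (u + v) w = dotv u w + dotv v w.
Proof. by rewrite !dotvE -big_split; apply: eq_bigr => i _; rewrite mxE mulrDl. Qed.

Lemma dotvZl n a (u w : 'cV[R]_n) : dotv (a *: u) w = a * dotv u w.
Proof. by rewrite !dotvE mulr_sumr; apply: eq_bigr => i _; rewrite mxE mulrA. Qed.

Lemma dotvNl n (u w : 'cV[R]_n) : dotv (- u) w = - dotv u w.
Proof. by rewrite -scaleN1r dotvZl mulN1r. Qed.

Lemma dotvBl n (u v w : 'cV[R]_n) : dotv (u - v) w = dotv u w - dotv v w.
Proof. by rewrite dotvDl dotvNl. Qed.

Lemma dotvDr n (u v w : 'cV[R]_n) : dotv w (u + v) = dotv w u + dotv w v.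
Proof. by rewrite dotvC dotvDl ![dotv _ w]dotvC. Qed.

Lemma dotvZr n a (u w : 'cV[R]_n) : dotv w (a *: u) = a * dotv w u.
Proof. by rewrite dotvC dotvZl dotvC. Qed.

Lemma dotvNr n (u w : 'cV[R]_n) : dotv w (- u) = - dotv w u.
Proof. by rewrite dotvC dotvNl dotvC. Qed.

Lemma dotvBr n (u v w : 'cV[R]_n) : dotv w (u - v) = dotv w u - dotv w v.
Proof. by rewrite dotvDr dotvNr. Qed.

Lemma dotv_mulmxl m n (B : 'M[R]_(m, n)) u v : dotv (B *m u) v = dotv u (B^T *m v).
Proof. by rewrite /dotv trmx_mul mulmxA. Qed.

Lemma dotv_trmxl m n (B : 'M[R]_(m, n)) u v : dotv (B^T *m u) v = dotv (B *m v) u.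
Proof. by rewrite dotvC dotv_mulmxl. Qed.

Lemma dotvv_ge0 n (u : 'cV[R]_n) : 0 <= dotv u u.
Proof. by rewrite dotvE; apply: sumr_ge0 => i _; rewrite -expr2 sqr_ge0. Qed.

Lemma dotvv_gt0 n (u : 'cV[R]_n) : u != 0 -> 0 < dotv u u.
Proof.
move=> u_neq0; rewrite lt_def dotvv_ge0 andbT; apply: contraNneq u_neq0.
rewrite dotvE => /eqP; rewrite psumr_eq0 => [/allP u0|i _]; last first.
  by rewrite -expr2 sqr_ge0.
apply/eqP/matrixP => i j; rewrite (ord1 j) mxE.
by have := u0 i (mem_index_enum _); rewrite -expr2 sqrf_eq0 => /eqP.
Qed.

Lemma dotv_Young n (u v : 'cV[R]_n) t : 0 < t ->
  2 * dotv u v <= t * dotv u u + t^-1 * dotv v v.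
Proof.
move=> t_gt0; have ti_ge0 : 0 <= t^-1 by rewrite invr_ge0 ltW.
have := mulr_ge0 ti_ge0 (dotvv_ge0 (t *: u - v)).
rewrite !dotvBl !dotvBr !dotvZl !dotvZr [dotv v u]dotvC.
have -> : t^-1 * (t * (t * dotv u u) - t * dotv u v - (t * dotv u v - dotv v v)) =
    t * dotv u u + t^-1 * dotv v v - 2 * dotv u v by field; rewrite gt_eqF.
by rewrite subr_ge0.
Qed.

Lemma dotvv_addZ n (v e : 'cV[R]_n) s :
  dotv (v + s *: e) (v + s *: e) = dotv v v + 2 * s * dotv v e + s ^+ 2 * dotv e e.
Proof. by rewrite dotvDl !dotvDr !dotvZl !dotvZr [dotv e v]dotvC; ring. Qed.

Lemma dotv_subr_le n (u v : 'cV[R]_n) :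
  dotv (u - v) (u - v) <= 2 * dotv u u + 2 * dotv v v.
Proof.
have := dotvv_ge0 (u + v).
by rewrite !dotvDl !dotvDr !dotvNl !dotvNr [dotv v u]dotvC; lra.
Qed.


Lemma psd_CauchySchwarz n (C : 'M[R]_n) : C^T = C ->
  (forall z, 0 <= dotv z (C *m z)) ->
  forall u v, dotv v (C *m u) ^+ 2 <= dotv u (C *m u) * dotv v (C *m v).
Proof.
move=> C_sym C_psd u v; apply: quad_ge0_discr => // s.
have := C_psd (u + s *: v).
rewrite mulmxDr -scalemxAr !dotvDl !dotvDr !dotvZl !dotvZr.
have -> : dotv u (C *m v) = dotv v (C *m u) by rewrite dotvC dotv_mulmxl C_sym.
by congr (0 <= _); ring.
Qed.

Lemma dotv_CauchySchwarz n (u v : 'cV[R]_n) : dotv u v ^+ 2 <= dotv u u * dotv v v.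
Proof.
have := @psd_CauchySchwarz n 1%:M (trmx1 _ _) _ v u.
by rewrite !mul1mx dotvC mulrC; apply => z; rewrite mul1mx dotvv_ge0.
Qed.

Lemma mx_dotv_bound m n (B : 'M[R]_(m, n)) :
  exists K, 0 <= K /\ forall z, dotv (B *m z) (B *m z) <= K * dotv z z.
Proof.
exists (\sum_i dotv (row i B)^T (row i B)^T); split.
  by apply: sumr_ge0 => i _; apply: dotvv_ge0.
move=> z; rewrite mulr_suml [leLHS]dotvE; apply: ler_sum => i _.
have -> : (B *m z) i 0 = dotv (row i B)^T z.
  by rewrite dotvE mxE; apply: eq_bigr => j _; rewrite !mxE.
by rewrite -expr2 dotv_CauchySchwarz.
Qed.

End DotProduct.

Section PsdForm.
Variables (R : realType) (n : nat) (C : 'M[R]_n) (c : R).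
Hypotheses (C_sym : C^T = C) (C_psd : forall z, 0 <= dotv z (C *m z)).
Hypotheses (c_ge0 : 0 <= c) (C_le : forall z, dotv z (C *m z) <= c * dotv z z).

Lemma psd_dotv_image z : dotv (C *m z) (C *m z) <= c * dotv z (C *m z).
Proof.
have CS := psd_CauchySchwarz C_sym C_psd z (C *m z).
have := ler_wpM2l (C_psd z) (C_le (C *m z)).
have := C_psd z; have := dotvv_ge0 (C *m z).
move: CS; set p := dotv (C *m z) (C *m z); set a := dotv z (C *m z).
move=> CS p_ge0 a_ge0 /(le_trans CS) p2_le.
by have := mulr_ge0 c_ge0 a_ge0; nra.
Qed.

Lemma unitmx_psd_coercive : C \in unitmx ->
  exists2 e, 0 < e & forall z, e * dotv z z <= dotv z (C *m z).
Proof.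
move=> C_unit; have [K [K_ge0 HK]] := mx_dotv_bound (invmx C).
have K1_gt0 : 0 < K * c + 1 by have := mulr_ge0 K_ge0 c_ge0; lra.
exists (K * c + 1)^-1 => [|z]; first by rewrite invr_gt0.
rewrite ler_pdivrMl //.
have := HK (C *m z); rewrite mulKmx // => z_le.
have := ler_wpM2l K_ge0 (psd_dotv_image z); have := C_psd z.
by nra.
Qed.

End PsdForm.

Section GramBound.
Variables (R : realType) (m n : nat) (A : 'M[R]_(m, n)).

Lemma eigenvalue_Gram_bound K a :
  (forall z, dotv (A *m z) (A *m z) <= K * dotv z z) ->
  eigenvalue (A^T *m A) a -> 0 <= a <= K.
Proof.
move=> HK /eigenvalueP [v vAA v_neq0]; set z := v^T.
have AAz : A^T *m A *m z = a *: z.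
  by rewrite /z -[A^T *m A]trmxK trmx_mul trmxK -trmx_mul vAA linearZ.
have z_gt0 : 0 < dotv z z by apply: dotvv_gt0; rewrite trmx_eq0.
have Az : dotv (A *m z) (A *m z) = a * dotv z z.
  by rewrite dotv_mulmxl mulmxA AAz dotvZr.
have := HK z; have := dotvv_ge0 (A *m z); rewrite Az.
by rewrite pmulr_lge0 // ler_pM2r // => -> ->.
Qed.

Lemma eigenvalue_Gram_le_spec_radius a :
  eigenvalue (A^T *m A) a -> a <= spec_radius (A^T *m A).
Proof.
move=> eig_a; have [K [_ HK]] := mx_dotv_bound A.
have /andP[a_ge0 _] := eigenvalue_Gram_bound HK eig_a.
have S_sup : has_sup [set `|b| | b in [set b | eigenvalue (A^T *m A) b]].
  split; first by exists `|a|, a.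
  exists K => _ [b eig_b <-].
  by have /andP[b_ge0 bK] := eigenvalue_Gram_bound HK eig_b; rewrite ger0_norm.
by rewrite -(ger0_norm a_ge0); apply: sup_upper_bound S_sup _ _; exists a.
Qed.

(* Take for r the infimum of the admissible constants.  If r > 0, then r I - A^T A
   is positive semidefinite; were it invertible it would be coercive and r could
   be lowered, so r is an eigenvalue of A^T A. *)
Lemma Gram_dotv_bound : exists r, [/\ 0 <= r, r = 0 \/ eigenvalue (A^T *m A) r &
  forall z, dotv (A *m z) (A *m z) <= r * dotv z z].
Proof.
set T := [set t : R | 0 <= t /\ forall z, dotv (A *m z) (A *m z) <= t * dotv z z].
have [K [K_ge0 HK]] := mx_dotv_bound A.
have T_inf : has_inf T by split; [exists K | exists 0 => t []].
set l := inf T.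
have l_ge0 : 0 <= l by apply: lb_le_inf T_inf.1 _ => t [].
have l_bound z : dotv (A *m z) (A *m z) <= l * dotv z z.
  apply/ler_addgt0Pr => e e_gt0; have q_ge0 := dotvv_ge0 z.
  set d := e / (dotv z z + 1).
  have d_gt0 : 0 < d by rewrite divr_gt0 //; lra.
  have dq : d * (dotv z z + 1) = e by rewrite divfK // gt_eqF //; lra.
  have [t [_ Ht] t_lt] := inf_adherent d_gt0 T_inf.
  by have := Ht z; nra.
exists l; split => //.
have [-> | l_neq0] := eqVneq l 0; [by left | right].
have l_gt0 : 0 < l by rewrite lt_def l_neq0.
set E := l%:M - A^T *m A.
have E_form z : dotv z (E *m z) = l * dotv z z - dotv (A *m z) (A *m z).
  by rewrite mulmxBl mul_scalar_mx dotvBr dotvZr dotv_mulmxl mulmxA.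
have E_sym : E^T = E by rewrite linearB /= tr_scalar_mx trmx_mul trmxK.
have E_psd z : 0 <= dotv z (E *m z) by rewrite E_form subr_ge0.
have E_le z : dotv z (E *m z) <= l * dotv z z by rewrite E_form gerBl dotvv_ge0.
have E_nonunit : E \notin unitmx.
  apply/negP => /(unitmx_psd_coercive E_sym E_psd (ltW l_gt0) E_le) [e e_gt0 He].
  have : T (Num.max 0 (l - e)).
    split=> [|z]; first by rewrite le_max lexx.
    have := He z; rewrite E_form => Hez.
    have le_max_le : l - e <= Num.max 0 (l - e) by rewrite le_max lexx orbT.
    by have := ler_wpM2r (dotvv_ge0 z) le_max_le; lra.
  by move/(ge_inf T_inf.2); rewrite le_max; lra.
rewrite /eigenvalue /eigenspace kermx_eq0.
have -> : A^T *m A - l%:M = - E by rewrite opprB.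
by rewrite /row_free mxrank_opp -/(row_free E) row_free_unit.
Qed.

End GramBound.

Lemma Gram_dotv_bound_lt (R : realType) m n (A : 'M[R]_(m, n)) L :
  0 <= L -> L * spec_radius (A^T *m A) < 1 ->
  exists r, [/\ 0 <= r, r * L < 1 & forall z, dotv (A *m z) (A *m z) <= r * dotv z z].
Proof.
move=> L_ge0 L_rho; have [r [r_ge0 r_eig r_bound]] := Gram_dotv_bound A.
exists r; split=> //; case: r_eig => [-> | eig_r]; first by rewrite mul0r.
apply: le_lt_trans L_rho; rewrite mulrC.
by apply: ler_wpM2l => //; apply: eigenvalue_Gram_le_spec_radius.
Qed.

Section Subdifferential.
Variables (R : realType) (n : nat) (f : 'cV[R]_n -> R) (X : set 'cV[R]_n).

(* Compare x with x + s (z - x): minimality and convexity give an inequality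
   which, divided by s, yields the subgradient inequality as s -> 0. *)
Lemma argmin_prox_subdiff t w x : convex_fun f -> convex_set X -> 0 < t ->
  is_argmin (fun z => f z + (2 * t)^-1 * sqnorm (z - w)) X x ->
  subdiff_ind f X x (t^-1 *: (w - x)).
Proof.
move=> f_cvx X_cvx t_gt0 [Xx x_min]; split=> // z Xz.
change (f x + dotv (t^-1 *: (w - x)) (z - x) <= f z).
set c := (2 * t)^-1.
have c_gt0 : 0 < c by rewrite invr_gt0 mulr_gt0.
have tc : t^-1 = 2 * c by rewrite /c invfM mulrA divff ?mul1r // pnatr_eq0.
set P := dotv (x - w) (z - x); set Q := dotv (z - x) (z - x).
have -> : dotv (t^-1 *: (w - x)) (z - x) = - (2 * c * P).
  by rewrite dotvZl tc -opprB dotvNl mulrN.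
suff : 0 <= f z - f x + 2 * c * P by lra.
apply: (ge0_add_small (b := c * Q)) => s /andP[s_gt0 s_le1].
have s01 : 0 <= s <= 1 by rewrite (ltW s_gt0) s_le1.
have := x_min _ (X_cvx z x s Xz Xx s01).
have f_zs := f_cvx z x s s01.
have -> : s *: z + (1 - s) *: x - w = (x - w) + s *: (z - x).
  by apply/matrixP => i j; rewrite !mxE; ring.
rewrite !sqnormE dotvv_addZ -/P -/Q => zs_min.
rewrite -(pmulr_rge0 _ s_gt0); nra.
Qed.

Lemma subdiff_ind_monotone x x' p p' :
  subdiff_ind f X x p -> subdiff_ind f X x' p' -> 0 <= dotv (p - p') (x - x').
Proof.
move=> [Xx Hp] [Xx' Hp']; have := Hp _ Xx'; have := Hp' _ Xx.
change ((f x' + dotv p' (x - x') <= f x) -> (f x + dotv p (x' - x) <= f x') ->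
  0 <= dotv (p - p') (x - x')).
rewrite -(opprB x x') dotvNr dotvBl; lra.
Qed.

End Subdifferential.

Section Gronwall.
Variables (R : realType) (b ph : nat -> R) (al : R) (n0 : nat).
Hypotheses (al_gt0 : 0 < al) (ph_ge0 : forall k, 0 <= ph k).
Hypothesis b_ge0 : forall n, (n0 <= n)%N -> 0 <= b n.
Hypothesis b_rec : forall n, (n0 <= n)%N -> (1 - al * ph n) * b n.+1 <= b n.

Local Notation psum n := (\sum_(k < n) ph k).

Lemma psum_nondecreasing : {homo (fun n => psum n) : m n / (m <= n)%N >-> m <= n}.
Proof.
move=> m n /subnKC <-; elim: (n - m)%N => [|d IH]; first by rewrite addn0.
by rewrite addnS big_ord_recr /= (le_trans IH) // lerDl.
Qed.

Lemma psum_tail_small Cp e : (forall n, psum n < Cp) -> 0 < e ->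
  exists K, forall n, (K <= n)%N -> psum n - psum K <= e.
Proof.
move=> psum_lt e_gt0; have s_sup : has_sup (range (fun n => psum n)).
  by split; [exists (psum 0), 0%N | exists Cp => _ [n _ <-]; apply: ltW].
have [_ [K _ <-] sK] := sup_adherent e_gt0 s_sup.
exists K => n _; have : psum n <= sup (range (fun n => psum n)).
  by apply: sup_upper_bound => //; exists n.
lra.
Qed.

Lemma gronwall_tail K : (n0 <= K)%N ->
  (forall n, (K <= n)%N -> al * (psum n - psum K) <= 1) ->
  forall d, b (K + d) * (1 - al * (psum (K + d) - psum K)) <= b K.
Proof.
move=> n0K tail; elim=> [|d IH]; first by rewrite addn0 subrr mulr0 subr0 mulr1.
have n0Kd : (n0 <= K + d)%N by rewrite (leq_trans n0K) ?leq_addr.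
have := tail _ (leq_addr d.+1 K); rewrite addnS big_ord_recr /= in IH *.
set T := al * (psum (K + d) - psum K); set p := al * ph (K + d)%N.
have T_ge0 : 0 <= T.
  by apply: mulr_ge0; [exact: ltW | rewrite subr_ge0 psum_nondecreasing ?leq_addr].
have p_ge0 : 0 <= p by apply: mulr_ge0; [exact: ltW | exact: ph_ge0].
have b_ge0' : 0 <= b (K + d).+1 by rewrite b_ge0 // (leq_trans n0Kd).
have -> : al * (psum (K + d) + ph (K + d)%N - psum K) = T + p by rewrite /T /p; ring.
move=> Tp_le1; have := b_rec n0Kd; rewrite -/p => rec.
have T_le1 : 0 <= 1 - T by lra.
have := ler_wpM2l T_le1 rec.
move: IH; rewrite -/T => IH.
by have := mulr_ge0 b_ge0' (mulr_ge0 T_ge0 p_ge0); nra.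
Qed.

Lemma discrete_gronwall Cp : (forall n, psum n < Cp) ->
  exists C, forall n, (n0 <= n)%N -> b n <= C.
Proof.
move=> psum_lt.
have e_gt0 : 0 < (2 * al)^-1 by rewrite invr_gt0 mulr_gt0.
have [K0 tail0] := psum_tail_small psum_lt e_gt0.
set K := maxn K0 n0.
have tail n : (K <= n)%N -> al * (psum n - psum K) <= 2^-1.
  move=> Kn; have K0n : (K0 <= n)%N by rewrite (leq_trans _ Kn) ?leq_maxl.
  have := ler_wpM2l (ltW al_gt0) (tail0 n K0n).
  have := psum_nondecreasing (leq_maxl K0 n0); rewrite -/K.
  rewrite invfM mulrCA divff ?gt_eqF // mulr1 => sK /(le_trans _); apply.
  by rewrite ler_pM2l // lerD2l lerN2.
exists (2 * b K + \sum_(i < K) `|b i|) => n n0n.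
have n0K : (n0 <= K)%N by rewrite leq_maxr.
have sum_ge0 : 0 <= \sum_(i < K) `|b i| by apply: sumr_ge0.
have [Kn | nK] := leqP K n.
  have tail1 m : (K <= m)%N -> al * (psum m - psum K) <= 1.
    by move=> /tail; lra.
  have := gronwall_tail n0K tail1 (n - K); rewrite subnKC //.
  by have := tail n Kn; have := b_ge0 n0n; nra.
rewrite (bigD1 (Ordinal nK)) //=.
have := ler_norm (b n); have : 0 <= \sum_(i < K | i != Ordinal nK) `|b i|.
  by apply: sumr_ge0.
have := b_ge0 n0K; lra.
Qed.

End Gronwall.

Section PdhgNorms.
Variables (R : realType) (N M : nat).
Implicit Types (t s : R) (a : 'cV[R]_N) (b : 'cV[R]_M) (A : 'M[R]_(M, N)).

Definition hnorm2 t s a b : R := t^-1 * dotv a a + s^-1 * dotv b b.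

Definition mnorm2 A t s a b : R := hnorm2 t s a b - 2 * dotv (A *m a) b.

Lemma hnorm2_ge0 t s a b : 0 < t -> 0 < s -> 0 <= hnorm2 t s a b.
Proof.
move=> t_gt0 s_gt0; rewrite /hnorm2.
by rewrite addr_ge0 // mulr_ge0 ?dotvv_ge0 // invr_ge0 ltW.
Qed.

Lemma mnorm2_le_sub A t s ex ey dx dy :
  t^-1 * dotv dx ex + s^-1 * dotv dy ey - dotv (A *m ex) dy - dotv (A *m dx) ey <= 0 ->
  mnorm2 A t s ex ey <= mnorm2 A t s (ex - dx) (ey - dy) - mnorm2 A t s dx dy.
Proof.
rewrite /mnorm2 /hnorm2 !mulmxBr !dotvBl !dotvBr [dotv dx ex]dotvC [dotv dy ey]dotvC.
lra.
Qed.

Lemma cross_le_hnorm2 A r t s th a b :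
  0 < t -> 0 < s -> 0 < th -> t * s * r <= th ^+ 2 ->
  (forall z, dotv (A *m z) (A *m z) <= r * dotv z z) ->
  2 * dotv (A *m a) b <= th * hnorm2 t s a b.
Proof.
move=> t_gt0 s_gt0 th_gt0 tsr_le A_bound.
have := dotv_Young (A *m a) b (divr_gt0 s_gt0 th_gt0); rewrite invf_div.
have : s / th * dotv (A *m a) (A *m a) <= th / t * dotv a a.
  apply: le_trans (ler_wpM2l (ltW (divr_gt0 s_gt0 th_gt0)) (A_bound a)) _.
  rewrite mulrA ler_wpM2r ?dotvv_ge0 //.
  rewrite -subr_ge0 (_ : th / t - s / th * r = (th ^+ 2 - t * s * r) / (th * t)).
    by rewrite divr_ge0 ?subr_ge0 // mulr_ge0 ?ltW.
  by field; rewrite !gt_eqF.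
rewrite /hnorm2; lra.
Qed.

Lemma hnorm2_le_mnorm2 A t s a b : 0 < t -> 0 < s ->
  hnorm2 t s a b <= 2 * mnorm2 A t s a b + 4 * (s * dotv (A *m a) (A *m a)).
Proof.
move=> t_gt0 s_gt0; have s2_gt0 : 0 < 2 * s by rewrite mulr_gt0.
have := dotv_Young (A *m a) b s2_gt0.
have : 0 <= t^-1 * dotv a a by rewrite mulr_ge0 ?dotvv_ge0 // invr_ge0 ltW.
rewrite /mnorm2 /hnorm2 invfM; lra.
Qed.

Lemma hnorm2_le_mnorm2_bounded A K D Bd t s a b : 0 < t -> 0 < s -> s <= Bd ->
  0 <= K -> (forall z, dotv (A *m z) (A *m z) <= K * dotv z z) -> dotv a a <= D ->
  hnorm2 t s a b <= 2 * mnorm2 A t s a b + 4 * (Bd * (K * D)).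
Proof.
move=> t_gt0 s_gt0 s_le K_ge0 A_bound aD.
have AaKD : dotv (A *m a) (A *m a) <= K * D.
  by rewrite (le_trans (A_bound a)) // ler_wpM2l.
have := hnorm2_le_mnorm2 A a b t_gt0 s_gt0.
have := ler_pM (ltW s_gt0) (dotvv_ge0 (A *m a)) s_le AaKD; lra.
Qed.

Lemma invf_le_rel_decr (u v p : R) : 0 < u -> 0 < v -> (u - v) / u <= p ->
  v^-1 <= u^-1 + p * v^-1.
Proof.
move=> u_gt0 v_gt0 uvp; rewrite -subr_ge0.
rewrite (_ : _ - _ = v^-1 * (p - (u - v) / u)); last by field; rewrite !gt_eqF.
by rewrite mulr_ge0 ?subr_ge0 // invr_ge0 ltW.
Qed.

Lemma hnorm2_le_rel_decr t t' s s' p a b : 0 < t -> 0 < t' -> 0 < s -> 0 < s' ->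
  (t - t') / t <= p -> (s - s') / s <= p ->
  hnorm2 t' s' a b <= hnorm2 t s a b + p * hnorm2 t' s' a b.
Proof.
move=> t_gt0 t'_gt0 s_gt0 s'_gt0 tp sp.
have := ler_wpM2r (dotvv_ge0 a) (invf_le_rel_decr t_gt0 t'_gt0 tp).
have := ler_wpM2r (dotvv_ge0 b) (invf_le_rel_decr s_gt0 s'_gt0 sp).
rewrite /hnorm2; lra.
Qed.

End PdhgNorms.

Lemma hnorm2C (R : realType) N M t s (a : 'cV[R]_N) (b : 'cV[R]_M) :
  hnorm2 s t b a = hnorm2 t s a b.
Proof. exact: addrC. Qed.

Lemma mnorm2_trmx (R : realType) N M (A : 'M[R]_(M, N)) t s a b :
  mnorm2 A^T s t b a = mnorm2 A t s a b.
Proof. by rewrite /mnorm2 hnorm2C dotv_trmxl. Qed.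

Lemma qnorm2_Hmat (R : realType) N M t s (a : 'cV[R]_N) (b : 'cV[R]_M) :
  qnorm2 (Hmat N M t s) (col_mx a b) = hnorm2 t s a b.
Proof.
rewrite /qnorm2 /Hmat tr_col_mx mul_row_block mul_row_col !mul_mx_scalar !mulmx0.
rewrite !add0r !addr0 -!scalemxAl.
by rewrite ![fun_of_matrix (_ + _) _ _]mxE ![fun_of_matrix (_ *: _) _ _]mxE.
Qed.

Lemma qnorm2_Mmat (R : realType) N M (A : 'M[R]_(M, N)) t s a b :
  qnorm2 (Mmat A t s) (col_mx a b) = mnorm2 A t s a b.
Proof.
rewrite /qnorm2 /Mmat tr_col_mx mul_row_block mul_row_col !mul_mx_scalar.
rewrite !mulmxDl -!scalemxAl !mulmxN !mulNmx.
rewrite ![fun_of_matrix (_ + _) _ _]mxE ![fun_of_matrix (- _) _ _]mxE.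
rewrite ![fun_of_matrix (_ *: _) _ _]mxE.
have -> : (b^T *m A *m a) 0 0 = dotv (A *m a) b by rewrite dotvC /dotv mulmxA.
have -> : (a^T *m A^T *m b) 0 0 = dotv (A *m a) b by rewrite dotv_mulmxl /dotv mulmxA.
rewrite /mnorm2 /hnorm2 /dotv; ring.
Qed.

Section Phi.
Variables (R : realType) (tau sigma : nat -> R) (k : nat).

Lemma phi_ge0 : 0 <= phi tau sigma k.
Proof. by rewrite /phi le_max lexx orbT. Qed.

Lemma phi_ge_tau : (tau k - tau k.+1) / tau k <= phi tau sigma k.
Proof. by rewrite /phi !le_max lexx. Qed.

Lemma phi_ge_sigma : (sigma k - sigma k.+1) / sigma k <= phi tau sigma k.
Proof. by rewrite /phi !le_max lexx orbT. Qed.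

End Phi.

Section PDHG.
Variables (R : realType) (N M : nat) (A : 'M[R]_(M, N)).
Variables (f : 'cV[R]_N -> R) (g : 'cV[R]_M -> R) (X : set 'cV[R]_N) (Y : set 'cV[R]_M).
Variables (tau sigma : nat -> R) (x : nat -> 'cV[R]_N) (y : nat -> 'cV[R]_M).
Variables (xs : 'cV[R]_N) (ys : 'cV[R]_M).
Hypotheses (f_cvx : convex_fun f) (g_cvx : convex_fun g).
Hypotheses (X_cvx : convex_set X) (Y_cvx : convex_set Y).
Hypotheses (tau_gt0 : forall k, 0 < tau k) (sigma_gt0 : forall k, 0 < sigma k).
Hypothesis pdhg : pdhg_iterates A f g X Y tau sigma x y.
Hypothesis xs_sub : subdiff_ind f X xs (- (A^T *m ys)).
Hypothesis ys_sub : subdiff_ind g Y ys (A *m xs).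

Local Notation hn k := (hnorm2 (tau k) (sigma k)).
Local Notation mn k := (mnorm2 A (tau k) (sigma k)).

(* The residuals of the two proximal steps are subgradients at u_{k+1}; against
   u* their monotonicity says <u_{k+1} - u*, u_{k+1} - u_k>_{M_k} <= 0. *)
Lemma pdhg_descent k :
  mn k (x k.+1 - xs) (y k.+1 - ys) <=
  mn k (x k - xs) (y k - ys) - mn k (x k.+1 - x k) (y k.+1 - y k).
Proof.
have [x_min y_min] := pdhg k.
have := subdiff_ind_monotone (argmin_prox_subdiff f_cvx X_cvx (tau_gt0 k) x_min) xs_sub.
have := subdiff_ind_monotone (argmin_prox_subdiff g_cvx Y_cvx (sigma_gt0 k) y_min) ys_sub.
set dx := x k.+1 - x k; set ex := x k.+1 - xs.
set dy := y k.+1 - y k; set ey := y k.+1 - ys.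
have -> : x k - xs = ex - dx by apply/matrixP => i j; rewrite !mxE; ring.
have -> : y k - ys = ey - dy by apply/matrixP => i j; rewrite !mxE; ring.
have -> : (tau k)^-1 *: (x k - tau k *: (A^T *m y k) - x k.+1) - - (A^T *m ys) =
    - ((tau k)^-1 *: dx) - A^T *m (ey - dy).
  rewrite (_ : ey - dy = y k - ys); last by apply/matrixP => i j; rewrite !mxE; ring.
  rewrite mulmxBr; set v := A^T *m y k; set w := A^T *m ys.
  by apply/matrixP => i j; rewrite !mxE; field; rewrite gt_eqF.
have -> : (sigma k)^-1 *: (y k + sigma k *: (A *m (2%:R *: x k.+1 - x k)) - y k.+1) - A *m xs =
    - ((sigma k)^-1 *: dy) + A *m (dx + ex).
  rewrite (_ : dx + ex = 2%:R *: x k.+1 - x k - xs); last first.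
    by apply/matrixP => i j; rewrite !mxE; ring.
  rewrite [in RHS]mulmxBr; set v := A *m (2%:R *: x k.+1 - x k); set w := A *m xs.
  by apply/matrixP => i j; rewrite !mxE; field; rewrite gt_eqF.
rewrite dotvDl dotvNl dotvZl mulmxDr (dotvDl (A *m dx)) => mono_y.
rewrite dotvBl dotvNl dotvZl dotv_trmxl dotvBr => mono_x.
by apply: mnorm2_le_sub; lra.
Qed.

Definition pdhg_norm_comparison al be := [/\ 0 < al,
  forall k, (0 < k)%N -> 0 <= mn k (x k.+1 - x k) (y k.+1 - y k) &
  forall k, (0 < k)%N -> hn k (x k - xs) (y k - ys) <= al * mn k (x k - xs) (y k - ys) + be].

Lemma pdhg_norm_comparison_C1 L :
  (forall k, (0 < k)%N -> tau k * sigma k < L) -> L * spec_radius (A^T *m A) < 1 ->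
  exists al be, pdhg_norm_comparison al be.
Proof.
move=> ts_lt L_rho.
have L_ge0 : 0 <= L.
  by have := ts_lt 1%N isT; have := mulr_gt0 (tau_gt0 1) (sigma_gt0 1); lra.
have [r [r_ge0 rL_lt1 A_bound]] := Gram_dotv_bound_lt L_ge0 L_rho.
(* r L <= th ^+ 2 < 1 by AM-GM. *)
set th := (1 + r * L) / 2.
have th_gt0 : 0 < th by rewrite divr_gt0 //; have := mulr_ge0 r_ge0 L_ge0; lra.
have th_lt1 : th < 1 by rewrite /th; lra.
have mn_ge k a b : (0 < k)%N -> (1 - th) * hn k a b <= mn k a b.
  move=> k_gt0; have tsr : tau k * sigma k * r <= th ^+ 2.
    have := ler_wpM2r r_ge0 (ltW (ts_lt k k_gt0)).
    by rewrite /th; have := mulr_ge0 r_ge0 L_ge0; nra.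
  have := cross_le_hnorm2 a b (tau_gt0 k) (sigma_gt0 k) th_gt0 tsr A_bound.
  by rewrite /mnorm2; lra.
have th1_gt0 : 0 < 1 - th by rewrite subr_gt0.
exists (1 - th)^-1, 0; split=> [|k k_gt0|k k_gt0]; rewrite ?invr_gt0 //.
  apply: le_trans (mn_ge _ _ _ k_gt0).
  by apply: mulr_ge0; [exact: ltW | exact: hnorm2_ge0].
by rewrite addr0 ler_pdivlMl // mn_ge.
Qed.

Lemma pdhg_norm_comparison_C2 B c :
  (forall k, tau k <= B /\ sigma k <= B) -> bounded_set X \/ bounded_set Y -> 0 < c ->
  (forall k, (0 < k)%N ->
    c * hn k (x k.+1 - x k) (y k.+1 - y k) <= mn k (x k.+1 - x k) (y k.+1 - y k)) ->
  exists al be, pdhg_norm_comparison al be.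
Proof.
move=> stepsize_le bounded c_gt0 M_ge_cH.
have step_ge0 k : (0 < k)%N -> 0 <= mn k (x k.+1 - x k) (y k.+1 - y k).
  move=> k_gt0; apply: le_trans (M_ge_cH k k_gt0).
  by apply: mulr_ge0; [exact: ltW | exact: hnorm2_ge0].
case: bounded => [[r r_bound] | [r r_bound]].
  have [K [K_ge0 A_bound]] := mx_dotv_bound A.
  exists 2, (4 * (B * (K * (4 * r)))); split=> // -[//|k] _.
  apply: hnorm2_le_mnorm2_bounded => //; first by case: (stepsize_le k.+1).
  have := dotv_subr_le (x k.+1) xs; have := r_bound _ (pdhg k).1.1.
  by have := r_bound _ xs_sub.1; rewrite !sqnormE; lra.
have [K [K_ge0 At_bound]] := mx_dotv_bound A^T.
exists 2, (4 * (B * (K * (4 * r)))); split=> // -[//|k] _.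
rewrite -hnorm2C -mnorm2_trmx.
apply: hnorm2_le_mnorm2_bounded => //; first by case: (stepsize_le k.+1).
have := dotv_subr_le (y k.+1) ys; have := r_bound _ (pdhg k).2.1.
by have := r_bound _ ys_sub.1; rewrite !sqnormE; lra.
Qed.

Lemma pdhg_energy_recursion al be n : pdhg_norm_comparison al be -> (0 < n)%N ->
  (1 - al * phi tau sigma n) * (al * mn n.+1 (x n.+1 - xs) (y n.+1 - ys) + be) <=
  al * mn n (x n - xs) (y n - ys) + be.
Proof.
move=> [al_gt0 step_ge0 H_le_M] n_gt0; have := H_le_M n.+1 isT.
have := hnorm2_le_rel_decr (x n.+1 - xs) (y n.+1 - ys) (tau_gt0 n) (tau_gt0 n.+1)
  (sigma_gt0 n) (sigma_gt0 n.+1) (phi_ge_tau tau sigma n) (phi_ge_sigma tau sigma n).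
have : mn n.+1 (x n.+1 - xs) (y n.+1 - ys) =
    mn n (x n.+1 - xs) (y n.+1 - ys) +
    (hn n.+1 (x n.+1 - xs) (y n.+1 - ys) - hn n (x n.+1 - xs) (y n.+1 - ys)).
  by rewrite /mnorm2; ring.
have := pdhg_descent n; have := step_ge0 n n_gt0; have := phi_ge0 tau sigma n.
set M1 := mn n.+1 _ _; set M0 := mn n (x n.+1 - xs) _; set an := mn n (x n - xs) _.
set H1 := hn n.+1 _ _; set ph := phi tau sigma n.
move=> ph_ge0 step desc M1E rel H1_le.
have phH1 : ph * H1 <= ph * (al * M1 + be) by apply: ler_wpM2l.
have M1_le : M1 <= an + ph * (al * M1 + be) by lra.
have := ler_wpM2l (ltW al_gt0) M1_le; lra.
Qed.

Lemma pdhg_dist2_bounded al be Cp : pdhg_norm_comparison al be ->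
  (forall n, \sum_(k < n) phi tau sigma k < Cp) ->
  exists2 CU, 0 < CU & forall k, hn k (x k - xs) (y k - ys) <= CU.
Proof.
move=> cmp psum_lt; have [al_gt0 _ H_le_M] := cmp.
have h0_ge0 := hnorm2_ge0 (x 0 - xs) (y 0 - ys) (tau_gt0 0) (sigma_gt0 0).
set b := fun n => al * mn n (x n - xs) (y n - ys) + be.
have b_ge0 n : (0 < n)%N -> 0 <= b n.
  by move=> n_gt0; apply: le_trans (H_le_M n n_gt0); apply: hnorm2_ge0.
have [C b_le] := discrete_gronwall al_gt0 (phi_ge0 tau sigma) b_ge0
  (fun n => @pdhg_energy_recursion al be n cmp) psum_lt.
exists (1 + `|C| + hn 0 (x 0 - xs) (y 0 - ys)) => [|[|k]].
- by have := normr_ge0 C; lra.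
- by have := normr_ge0 C; lra.
- have := H_le_M k.+1 isT; have := b_le k.+1 isT; have := ler_norm C.
  by rewrite /b; lra.
Qed.

End PDHG.

Theorem mainTheorem3 (R : realType) (N M : nat) (A : 'M[R]_(M, N))
  (f : 'cV[R]_N -> R) (g : 'cV[R]_M -> R) (X : set 'cV[R]_N) (Y : set 'cV[R]_M)
  (tau sigma : nat -> R) (x : nat -> 'cV[R]_N) (y : nat -> 'cV[R]_M)
  (xs : 'cV[R]_N) (ys : 'cV[R]_M) :
  convex_fun f -> convex_fun g -> convex_set X -> convex_set Y ->
  (forall k, 0 < tau k) -> (forall k, 0 < sigma k) ->
  pdhg_iterates A f g X Y tau sigma x y ->
  (* (A) *)
  (exists B : R, forall k, tau k <= B /\ sigma k <= B) ->
  (* (B) *)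
  (exists Cphi : R, forall n, \sum_(k < n) phi tau sigma k < Cphi) ->
  (* (C) *)
  ((exists L : R, (forall k, (0 < k)%N -> tau k * sigma k < L) /\
                  L * spec_radius (A^T *m A) < 1)
   \/
   ((bounded_set X \/ bounded_set Y) /\
    exists c : R, 0 < c < 1 /\
      forall k, (0 < k)%N ->
        qnorm2 (Mmat A (tau k) (sigma k)) (col_mx (x k.+1) (y k.+1) - col_mx (x k) (y k))
        >= c * qnorm2 (Hmat N M (tau k) (sigma k)) (col_mx (x k.+1) (y k.+1) - col_mx (x k) (y k)))) ->
  (* saddle point *)
  subdiff_ind f X xs (- (A^T *m ys)) ->
  subdiff_ind g Y ys (A *m xs) ->
  exists CU : R, 0 < CU /\
    forall k, qnorm2 (Hmat N M (tau k) (sigma k)) (col_mx (x k) (y k) - col_mx xs ys) <= CU.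
Proof.
move=> f_cvx g_cvx X_cvx Y_cvx tau_gt0 sigma_gt0 pdhg [B stepsize_le] [Cp psum_lt] cond
  xs_sub ys_sub.
have [al [be cmp]] : exists al be, pdhg_norm_comparison A tau sigma x y xs ys al be.
  case: cond => [[L [ts_lt L_rho]] | [bounded [c [/andP[c_gt0 _] M_ge_cH]]]].
    exact (pdhg_norm_comparison_C1 x y xs ys tau_gt0 sigma_gt0 ts_lt L_rho).
  apply: (pdhg_norm_comparison_C2 tau_gt0 sigma_gt0 pdhg xs_sub ys_sub stepsize_le bounded c_gt0).
  move=> k k_gt0.
  by have := M_ge_cH k k_gt0; rewrite opp_col_mx add_col_mx qnorm2_Mmat qnorm2_Hmat.
have [CU CU_gt0 dist2_le] :=
  pdhg_dist2_bounded f_cvx g_cvx X_cvx Y_cvx tau_gt0 sigma_gt0 pdhg xs_sub ys_sub cmp psum_lt.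
by exists CU; split=> // k; rewrite opp_col_mx add_col_mx qnorm2_Hmat.
Qed.
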